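(* Let $n\ge 1$, $a=(a_1,\dots,a_n)\in\mathbb{R}^n$, $\omega=(\omega_1,\dots,\omega_n)\in\mathbb{R}^n$, $\varphi=(\varphi_1,\dots,\varphi_n)\in\mathbb{R}^n$ and $b\in\mathbb{R}$, and define $h:\mathbb{R}\to\mathbb{R}$ by $$h(x)=\sin\Big(\sum_{i=1}^n a_i\sin(\omega_i x+\varphi_i)+b\Big).$$ Then for every $x\in\mathbb{R}$, $$h(x)=\sum_{\mathbf{k}\in\mathbb{Z}^n}\alpha_{\mathbf{k}}(a)\,\sin\Big(\sum_{i=1}^n k_i(\omega_i x+\varphi_i)+b\Big),\qquad \text{where } \alpha_{\mathbf{k}}(a)=\prod_{i=1}^n J_{k_i}(a_i).$$
   Context: For an integer $k$, $J_k$ denotes the Bessel function of the first kind of order $k$. The function $h$ is called a sinusoidal neuron of width $n$ with amplitudes $a$, frequencies $\omega$, phases $\varphi$ and bias $b$. Here $\mathbf{k}=(k_1,\dots,k_n)$. *)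

From HB Require Import structures.
From mathcomp Require Import all_boot all_order all_algebra.
From mathcomp Require Import all_classical all_reals all_analysis.
Set Implicit Arguments. Unset Strict Implicit. Unset Printing Implicit Defensive.
Import Order.TTheory GRing.Theory Num.Theory.
Import numFieldNormedType.Exports.
Local Open Scope ring_scope.

Definition bessel_term {R : realType} (k : nat) (x : R) (m : nat) : R :=
  (-1) ^+ m / ((m`!)%:R * ((m + k)`!)%:R) * (x / 2) ^+ (2 * m + k).

Definition besselJ_nat {R : realType} (k : nat) (x : R) : R :=
  limn (series (bessel_term k x)).

Definition besselJ {R : realType} (k : int) (x : R) : R :=
  match k with
  | Posz m => besselJ_nat m x
  | Negz m => (-1) ^+ m.+1 * besselJ_nat m.+1 x
  end.

Definition sin_neuron {R : realType} (n : nat) (a w phi : 'I_n -> R) (b : R)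
  (x : R) : R :=
  sin (\sum_(i < n) a i * sin (w i * x + phi i) + b).

Definition alpha {R : realType} (n : nat) (k : 'I_n -> int) (a : 'I_n -> R) : R :=
  \prod_(i < n) besselJ (k i) (a i).

Definition expansion_term {R : realType} (n : nat) (a w phi : 'I_n -> R) (b x : R)
  (k : 'I_n -> int) : R :=
  alpha k a * sin (\sum_(i < n) (k i)%:~R * (w i * x + phi i) + b).

(* sum of F over the box {-N,...,N}^n of Z^n *)
Definition box_sum {R : realType} (n N : nat) (F : ('I_n -> int) -> R) : R :=
  \sum_(k : {ffun 'I_n -> 'I_(2 * N).+1})
     F (fun i => (nat_of_ord (k i))%:Z - N%:Z).

(* Put t = a/2.  The double series
     sum_(p, q) (-1)^q t^(p+q) / (p! q!) * e^(i (p - q) theta)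
   is the product of the exponential series of t e^(i theta) and of
   -t e^(-i theta), so it equals e^(t (e^(i theta) - e^(-i theta))) = e^(i a sin theta).
   It is dominated by the product of two copies of sum_p |t|^p / p!, hence it may
   be summed along the diagonals p - q = k, and the k-th diagonal sum is
   J_k(a) e^(i k theta): this is the Jacobi-Anger expansion.  The exponential
   series of t e^(i theta) is handled through its real and imaginary parts, which
   solve a linear differential system.  For n neurons, the box partial sums of the
   expansion are the imaginary parts of e^(i b) times the product of n centered
   one-dimensional partial sums, and these converge to
   e^(i b) prod_j e^(i a_j sin theta_j); absolute boundedness comes from
   sum_k |J_k(a)| <= 2 e^|a|. *)

From HB Require Import structures.
From mathcomp Require Import all_boot all_order all_algebra.
From mathcomp Require Import all_classical all_reals all_analysis.
From mathcomp Require Import ring zify.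
From mathcomp Require Import complex.
Import Order.TTheory GRing.Theory Num.Theory.
Import numFieldNormedType.Exports.
Local Open Scope classical_set_scope.
Local Open Scope ring_scope.

Section ExponentialGeneratingFunction.
Context {R : realType}.
Implicit Types (h : nat -> R) (C t : R).

Definition egf_coeff h (p : nat) : R := h p / p`!%:R.

Definition egf h t : R := limn (pseries (egf_coeff h) t).

Lemma is_cvg_egf {h C} : (forall p, `|h p| <= C) ->
  forall t, cvgn (pseries (egf_coeff h) t).
Proof.
move=> hC t; apply: normed_cvg.
have C_ge0 : 0 <= C by apply: le_trans (hC 0%N).
apply: (series_le_cvg _ _ _ (is_cvg_seriesZ (k := C) (is_cvg_series_exp_coeff `|t|))).
- by move=> p; rewrite normr_ge0.
- by move=> p; rewrite /= /exp_coeff mulr_ge0 ?divr_ge0 ?exprn_ge0.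
- move=> p; rewrite /= /exp_coeff /egf_coeff !normrM normrX normfV normr_nat.
  rewrite !fctE /= mulrAC [leRHS]mulrA.
  by rewrite ler_wpM2r ?invr_ge0 // ler_wpM2r ?exprn_ge0.
Qed.

Lemma pseries_diffs_egf_coeff h :
  pseries_diffs (egf_coeff h) = egf_coeff (fun p => h p.+1).
Proof.
apply/funext => p; rewrite /pseries_diffs /egf_coeff factS natrM invfM.
by field; rewrite pnatr_eq0 -lt0n fact_gt0 addrC natr1 pnatr_eq0.
Qed.

Lemma is_derive_egf {h C} : (forall p, `|h p| <= C) ->
  forall t, is_derive t 1 (egf h) (egf (fun p => h p.+1) t).
Proof.
move=> hC t; rewrite /egf -pseries_diffs_egf_coeff.
apply: (pseries_snd_diffs (K := `|t| + 1)); rewrite ?pseries_diffs_egf_coeff.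
1-3: by apply: is_cvg_egf => p; apply: hC.
by rewrite [ltRHS]ger0_norm ?ltrDl // addr_ge0.
Qed.

Lemma egf0 h : egf h 0 = h 0%N.
Proof.
rewrite /egf; apply: lim_near_cst => //; near=> n.
have n_gt0 : (0 < n)%N by near: n; exists 1%N.
rewrite /pseries /series /= -(prednK n_gt0) big_nat_recl // expr0 mulr1.
rewrite big1 ?addr0 => [|i _]; last by rewrite expr0n mulr0.
by rewrite /egf_coeff fact0 divr1.
Unshelve. all: by end_near.
Qed.

Lemma egf_lin {h1 h2 C} : (forall p, `|h1 p| <= C) -> (forall p, `|h2 p| <= C) ->
  forall k1 k2 t, egf (fun p => k1 * h1 p + k2 * h2 p) t = k1 * egf h1 t + k2 * egf h2 t.
Proof.
move=> h1C h2C k1 k2 t; apply: cvg_lim => //.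
have -> : pseries (egf_coeff (fun p => k1 * h1 p + k2 * h2 p)) t =
    (fun n => k1 * pseries (egf_coeff h1) t n + k2 * pseries (egf_coeff h2) t n).
  apply/funext => n; rewrite /pseries /series /= !mulr_sumr -big_split.
  by apply: eq_bigr => i _; rewrite /egf_coeff /=; ring.
by apply: cvgD; apply: cvgMr; [exact: (is_cvg_egf h1C t) | exact: (is_cvg_egf h2C t)].
Qed.

End ExponentialGeneratingFunction.

Section ExponentialGeneratingFunctionTrig.
Context {R : realType}.
Variable phi : R.
Let E := egf (fun p => cos (p%:R * phi)).
Let F := egf (fun p => sin (p%:R * phi)).

Let cos_le1 p : `|cos (p%:R * phi)| <= 1. Proof. exact: cos_max. Qed.
Let sin_le1 p : `|sin (p%:R * phi)| <= 1. Proof. exact: sin_max. Qed.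

Lemma is_derive_egf_cos x : is_derive x (1 : R) E (cos phi * E x - sin phi * F x).
Proof.
rewrite -mulNr /E /F -(egf_lin cos_le1 sin_le1).
have -> : (fun p => cos phi * cos (p%:R * phi) + - sin phi * sin (p%:R * phi)) =
    (fun p => cos (p.+1%:R * phi)).
  by apply/funext => p; rewrite -natr1 mulrDl mul1r cosD; ring.
exact: (is_derive_egf cos_le1 x).
Qed.

Lemma is_derive_egf_sin x : is_derive x (1 : R) F (sin phi * E x + cos phi * F x).
Proof.
rewrite /E /F -(egf_lin cos_le1 sin_le1).
have -> : (fun p => sin phi * cos (p%:R * phi) + cos phi * sin (p%:R * phi)) =
    (fun p => sin (p.+1%:R * phi)).
  by apply/funext => p; rewrite -natr1 mulrDl mul1r sinD; ring.
exact: (is_derive_egf sin_le1 x).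
Qed.

Lemma egf_cos_sin_mul t :
  E t = expR (t * cos phi) * cos (t * sin phi) /\
  F t = expR (t * cos phi) * sin (t * sin phi).
Proof.
have dE := is_derive_egf_cos; have dF := is_derive_egf_sin.
set c := cos phi in dE dF *; set s := sin phi in dE dF *.
(* [A] and [B] are first integrals of the linear system [E' = c E - s F, F' = s E + c F]. *)
pose A := (expR \o *%R (- c)) * (E * (cos \o *%R s) + F * (sin \o *%R s)).
pose B := (expR \o *%R (- c)) * (F * (cos \o *%R s) - E * (sin \o *%R s)).
have dA x : is_derive x (1 : R) A 0.
  by apply: is_derive_eq; rewrite /GRing.scale /= !fctE /=; ring.
have dB x : is_derive x (1 : R) B 0.
  by apply: is_derive_eq; rewrite /GRing.scale /= !fctE /=; ring.
have E0 : E 0 = 1 by rewrite /E egf0 mul0r cos0.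
have F0 : F 0 = 0 by rewrite /F egf0 mul0r sin0.
set co := cos (s * t); set si := sin (s * t).
have expR_neq0 : expR (- c * t) != 0 by rewrite gt_eqF ?expR_gt0.
have At : E t * co + F t * si = expR (t * c).
  apply: (mulfI expR_neq0); rewrite -expRD [t * c]mulrC -mulrDl addNr mul0r expR0.
  by rewrite [LHS](is_derive_0_is_cst t 0 dA) /A !fctE /= !mulr0 expR0 E0 F0 cos0 sin0; ring.
have Bt : F t * co - E t * si = 0.
  apply: (mulfI expR_neq0); rewrite mulr0.
  by rewrite [LHS](is_derive_0_is_cst t 0 dB) /B !fctE /= !mulr0 expR0 E0 F0 cos0 sin0; ring.
have cs : co ^+ 2 + si ^+ 2 = 1 by apply: cos2Dsin2.
split.
- have -> : E t = (E t * co + F t * si) * co - (F t * co - E t * si) * si.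
    by rewrite -[LHS]mulr1 -cs; ring.
  by rewrite At Bt mul0r subr0 !(mulrC t).
- have -> : F t = (E t * co + F t * si) * si + (F t * co - E t * si) * co.
    by rewrite -[LHS]mulr1 -cs; ring.
  by rewrite At Bt mul0r addr0 !(mulrC t).
Qed.

End ExponentialGeneratingFunctionTrig.

Section NonnegativeSeries.
Context {R : realType}.
Context {gam : nat -> R}.
Hypotheses (gam_ge0 : forall p, 0 <= gam p) (gam_cvg : cvgn (series gam)).
Let G := limn (series gam).

Lemma nondecreasing_series_ge0 : nondecreasing_seq (series gam).
Proof. by apply/nondecreasing_seqP => n; rewrite seriesSr lerDl. Qed.

Lemma series_le_lim n : series gam n <= G.
Proof. exact: nondecreasing_cvgn_le nondecreasing_series_ge0 gam_cvg n. Qed.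

Lemma lim_series_ge0 : 0 <= G.
Proof. by apply: le_trans (series_le_lim 0); rewrite /series /= big_geq. Qed.

Lemma term_le_lim_series p : gam p <= G.
Proof. by apply: le_trans (series_le_lim p.+1); rewrite seriesS lerDl sumr_ge0. Qed.

Lemma sum_shift_le_tail m n s :
  \sum_(m <= i < n) gam (i + s) <= G - series gam (m + s).
Proof.
have [mn|/ltnW nm] := leqP m n; last by rewrite big_geq // subr_ge0 series_le_lim.
have -> : \sum_(m <= i < n) gam (i + s) = \sum_(m + s <= i < n + s) gam i.
  by rewrite big_addn addnK.
by rewrite -sub_series_geq ?leq_add2r // lerD2r series_le_lim.
Qed.

Lemma cvg_lim_sub_series : (fun n => G - series gam n) @ \oo --> 0.
Proof. by rewrite -(subrr G); apply: cvgB; [exact: cvg_cst | exact: gam_cvg]. Qed.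

End NonnegativeSeries.

Section CenteredSums.
Context {V : zmodType}.

Definition centered_sum (N : nat) (F : int -> V) : V :=
  \sum_(j < (2 * N).+1) F (j%:Z - N%:Z).

Lemma centered_sumE N F :
  centered_sum N F = \sum_(0 <= m < N.+1) F m + \sum_(0 <= m < N) F (Negz m).
Proof.
rewrite /centered_sum -(big_mkord xpredT (fun j => F (j%:Z - N%:Z))).
elim: N => [|N IH]; first by rewrite muln0 !big_nat1 big_geq // subrr addr0.
rewrite (_ : (2 * N.+1).+1 = (2 * N).+3)%N; last by lia.
rewrite big_nat_recl // big_nat_recr //=.
have -> : \sum_(0 <= i < (2 * N).+1) F (i.+1%:Z - N.+1%:Z) =
          \sum_(0 <= j < (2 * N).+1) F (j%:Z - N%:Z).
  by apply: eq_bigr => i _; congr F; lia.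
rewrite IH [in RHS]big_nat_recr //= [X in _ = _ + X]big_nat_recr //=.
rewrite (_ : 0%:Z - N.+1%:Z = Negz N); last by rewrite NegzE sub0r.
rewrite (_ : ((2 * N).+2)%:Z - N.+1%:Z = N.+1%:Z); last by lia.
by rewrite [LHS]addrC -[LHS]addrA [RHS]addrACA.
Qed.

Definition diagonal (T : nat -> nat -> V) (k : int) (q : nat) : V :=
  match k with Posz m => T (q + m)%N q | Negz m => T q (q + m.+1)%N end.

Lemma sum_square_diagonals (T : nat -> nat -> V) P :
  \sum_(0 <= p < P) \sum_(0 <= q < P) T p q =
  \sum_(0 <= q < P) (series (fun m => T (q + m)%N q) (P - q)%N +
                     series (fun m => T q (q + m.+1)%N) (P - q.+1)%N).
Proof.
elim: P => [|P IH]; first by rewrite !big_geq.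
have extend q : (q < P)%N ->
    series (fun m => T (q + m)%N q) (P.+1 - q)%N +
    series (fun m => T q (q + m.+1)%N) (P.+1 - q.+1)%N =
    series (fun m => T (q + m)%N q) (P - q)%N +
    series (fun m => T q (q + m.+1)%N) (P - q.+1)%N + (T P q + T q P).
  move=> qP; rewrite (subSn qP) (subSn (ltnW qP)) !seriesSr.
  by rewrite subnKC ?(ltnW qP) // -addSnnS subnKC // addrACA.
rewrite big_nat_recr //= [in RHS]big_nat_recr //= subSnn subnn.
under [in RHS]eq_big_nat => q /andP[_ qP] do rewrite extend //.
rewrite big_split /= -IH.
under [in LHS]eq_bigr do rewrite big_nat_recr //=.
rewrite big_split /= [X in _ + X = _]big_nat_recr //= big_split /=.
rewrite /series /= big_nat1 (big_geq (leqnn 0)) addn0 addr0 -!addrA.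
by congr (_ + _); rewrite addrCA.
Qed.

Lemma centered_sum_diagonals (T : nat -> nat -> V) N P :
  centered_sum N (fun k => series (diagonal T k) P) =
  \sum_(0 <= q < P) (series (fun m => T (q + m)%N q) N.+1 +
                     series (fun m => T q (q + m.+1)%N) N).
Proof.
by rewrite centered_sumE /series /= !(exchange_big_nat _ 0 _ 0 P) -big_split.
Qed.

End CenteredSums.

Lemma cvg_centered_sum {R : realType} N (u : int -> nat -> R) (l : int -> R) :
  (forall k, u k @ \oo --> l k) ->
  (fun P => centered_sum N (fun k => u k P)) @ \oo --> centered_sum N l.
Proof. by move=> ul; apply: cvg_big => //; exact: add_continuous. Qed.

Lemma raddf_centered_sum {U V : zmodType} (f : {additive U -> V}) N (F : int -> U) :
  f (centered_sum N F) = centered_sum N (fun k => f (F k)).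
Proof. exact: raddf_sum. Qed.

Lemma prod_centered_sum {S : comNzRingType} n N (F : 'I_n -> int -> S) :
  \prod_(i < n) centered_sum N (F i) =
  \sum_(k : {ffun 'I_n -> 'I_(2 * N).+1}) \prod_(i < n) F i ((k i : nat)%:Z - N%:Z).
Proof. exact: bigA_distr_bigA. Qed.

Lemma box_sum_prod {R : realType} n N (F : 'I_n -> int -> R) :
  box_sum N (fun k => \prod_(i < n) F i (k i)) = \prod_(i < n) centered_sum N (F i).
Proof. by rewrite prod_centered_sum. Qed.

Lemma norm_sub_series_le {R : realType} {F w : nat -> R} m n :
  (forall k, `|F k| <= w k) ->
  `|series F n - series F m| <= \sum_(minn m n <= k < maxn m n) w k.
Proof.
move=> Fw; rewrite sub_series; have [_|_] := leqP m n; rewrite ?normrN;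
  by apply: le_trans (ler_norm_sum _ _ _) _; apply: ler_sum.
Qed.

Section DominatedKernel.
Context {R : realType}.
Context {gam : nat -> R}.
Hypotheses (gam_ge0 : forall p, 0 <= gam p) (gam_cvg : cvgn (series gam)).
Let G := limn (series gam).
Context {T : nat -> nat -> R}.
Hypothesis T_le : forall p q, `|T p q| <= gam p * gam q.

Let lower_le q m : `|T (q + m)%N q| <= gam q * gam (m + q)%N.
Proof. by rewrite mulrC addnC. Qed.

Let upper_le q m : `|T q (q + m.+1)%N| <= gam q * gam (m + q.+1)%N.
Proof. by rewrite addnS -addSn addnC. Qed.

Lemma norm_diagonal_le k q : `|diagonal T k q| <= G * gam q.
Proof.
case: k => m /=; apply: le_trans (T_le _ _) _.
  by rewrite ler_wpM2r ?(term_le_lim_series gam_ge0 gam_cvg).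
by rewrite [G * _]mulrC ler_wpM2l ?(term_le_lim_series gam_ge0 gam_cvg).
Qed.

Lemma is_cvg_diagonal k : cvgn (series (diagonal T k)).
Proof.
apply: normed_cvg.
apply: series_le_cvg (is_cvg_seriesZ (k := G) gam_cvg) => n /=.
- exact: normr_ge0.
- by rewrite mulr_ge0 ?(lim_series_ge0 gam_ge0 gam_cvg).
- exact: norm_diagonal_le.
Qed.

Lemma norm_sub_series_le_tail (F : nat -> R) q s M M' n0 :
    (forall m, `|F m| <= gam q * gam (m + s)%N) -> (n0 <= minn M M' + s)%N ->
  `|series F M - series F M'| <= gam q * (G - series gam n0).
Proof.
move=> Fle n0_le; apply: le_trans (norm_sub_series_le M' M Fle) _.
rewrite -mulr_sumr ler_wpM2l //.
apply: le_trans (sum_shift_le_tail gam_ge0 gam_cvg _ _ _) _.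
by rewrite lerD2l lerN2 minnC; apply: nondecreasing_series_ge0.
Qed.

Lemma series_norm_le (F : nat -> R) q s M :
  (forall m, `|F m| <= gam q * gam (m + s)%N) -> series (fun m => `|F m|) M <= gam q * G.
Proof.
move=> Fle; apply: le_trans (_ : series (fun m => gam q * gam (m + s)%N) M <= _).
  exact: ler_sum.
rewrite /series /= -mulr_sumr ler_wpM2l //.
apply: le_trans (sum_shift_le_tail gam_ge0 gam_cvg 0 M s) _.
by rewrite lerBlDr lerDl sumr_ge0.
Qed.

Lemma norm_centered_sum_diagonals_sub_square_le N P : (N < P)%N ->
  `|centered_sum N (fun k => series (diagonal T k) P) -
    \sum_(0 <= p < P) \sum_(0 <= q < P) T p q| <= (G * (G - series gam N.+1)) *+ 2.
Proof.
move=> NP; rewrite centered_sum_diagonals sum_square_diagonals -sumrB.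
apply: le_trans (ler_norm_sum _ _ _) _.
apply: (@le_trans _ _ (\sum_(0 <= q < P) (gam q * (G - series gam N.+1)) *+ 2)).
  apply: ler_sum_nat => q /andP[_ qP]; rewrite opprD addrACA mulr2n.
  apply: le_trans (ler_normD _ _) _; apply: lerD.
  - by apply: norm_sub_series_le_tail (lower_le q) _; lia.
  - by apply: norm_sub_series_le_tail (upper_le q) _; lia.
rewrite sumrMnl -mulr_suml lerMn2r /= ler_wpM2r //.
- by rewrite subr_ge0 (series_le_lim gam_ge0 gam_cvg).
- exact: (series_le_lim gam_ge0 gam_cvg).
Qed.

Lemma cvg_centered_sum_diagonals (L : R) :
  (fun P => \sum_(0 <= p < P) \sum_(0 <= q < P) T p q) @ \oo --> L ->
  (fun N => centered_sum N (fun k => limn (series (diagonal T k)))) @ \oo --> L.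
Proof.
move=> squareL; set B := fun N => _.
have B_near N : `|B N - L| <= (G * (G - series gam N.+1)) *+ 2.
  have cvgP : (fun P => `|centered_sum N (fun k => series (diagonal T k) P) -
      \sum_(0 <= p < P) \sum_(0 <= q < P) T p q|) @ \oo --> `|B N - L|.
    exact: cvg_norm (cvgB (cvg_centered_sum N _ _ is_cvg_diagonal) squareL).
  rewrite -(cvg_lim _ cvgP) //; apply: limr_le; first by apply/cvg_ex; exists `|B N - L|.
  by near=> P; apply: norm_centered_sum_diagonals_sub_square_le; near: P; exists N.+1.
have tail0 : (fun N => (G * (G - series gam N.+1)) *+ 2) @ \oo --> 0.
  rewrite -(mul0rn _ 2) -(mulr0 G); apply: cvgMn; apply: cvgMr.
  by rewrite (cvg_shiftS (fun N => G - series gam N)); exact: cvg_lim_sub_series.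
apply: cvg_sub0 (cvg_cst L); apply/norm_cvg0P.
by apply: squeeze_cvgr (cvg_cst 0) tail0; near=> N; rewrite normr_ge0 B_near.
Unshelve. all: by end_near.
Qed.

Lemma centered_sum_norm_lim_diagonal_le N :
  centered_sum N (fun k => `|limn (series (diagonal T k))|) <= (G * G) *+ 2.
Proof.
have cvgP : (fun P => centered_sum N (fun k => `|series (diagonal T k) P|)) @ \oo -->
    centered_sum N (fun k => `|limn (series (diagonal T k))|).
  exact: cvg_centered_sum N _ _ (fun k => cvg_norm (is_cvg_diagonal k)).
rewrite -(cvg_lim _ cvgP) //; apply: limr_le; first by apply/cvg_ex; eexists; exact: cvgP.
apply: nearW => P.
apply: (@le_trans _ _
  (centered_sum N (fun k => series (diagonal (fun p q => `|T p q|) k) P))).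
  apply: ler_sum => j _; apply: le_trans (ler_norm_sum _ _ _) _.
  by apply: ler_sum => q _; case: (_ - _)%R.
rewrite centered_sum_diagonals.
apply: (@le_trans _ _ (\sum_(0 <= q < P) (gam q * G) *+ 2)).
  by apply: ler_sum => q _; rewrite mulr2n;
    apply: lerD; apply: series_norm_le; [exact: lower_le | exact: upper_le].
by rewrite sumrMnl -mulr_suml lerMn2r /= ler_wpM2r ?(lim_series_ge0 gam_ge0 gam_cvg)
  ?(series_le_lim gam_ge0 gam_cvg).
Qed.

End DominatedKernel.

Section BesselKernel.
Context {R : realType}.
Implicit Types (a : R) (g : int -> R).

Definition bessel_kernel a g (p q : nat) : R :=
  (-1) ^+ q * exp_coeff (a / 2) p * exp_coeff (a / 2) q * g (p%:Z - q%:Z).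

Lemma norm_exp_coeff (x : R) p : `|exp_coeff x p| = exp_coeff `|x| p.
Proof. by rewrite /exp_coeff /= normrM normrX normfV normr_nat. Qed.

Lemma exp_coeff_ge0 (x : R) p : 0 <= exp_coeff `|x| p.
Proof. by rewrite -norm_exp_coeff. Qed.

Lemma norm_bessel_kernel_le a g : (forall k, `|g k| <= 1) ->
  forall p q, `|bessel_kernel a g p q| <= exp_coeff `|a / 2| p * exp_coeff `|a / 2| q.
Proof.
move=> g_le1 p q; rewrite /bessel_kernel -!norm_exp_coeff.
set cp := exp_coeff _ p; set cq := exp_coeff _ q.
by rewrite !normrM normrX normrN normr1 expr1n mul1r ler_piMr ?mulr_ge0.
Qed.

Lemma bessel_termE a k q :
  bessel_term k a q = (-1) ^+ q * exp_coeff (a / 2) (q + k) * exp_coeff (a / 2) q.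
Proof.
rewrite /bessel_term /exp_coeff /= (_ : (2 * q + k = (q + k) + q)%N); last by lia.
by rewrite exprD invfM; ring.
Qed.

Lemma is_cvg_bessel_term a k : cvgn (series (bessel_term k a)).
Proof.
have one_le1 (i : int) : `|1 : R| <= 1 by rewrite normr1.
suff -> : bessel_term k a = diagonal (bessel_kernel a (fun=> 1)) k.
  exact: (is_cvg_diagonal (exp_coeff_ge0 (a / 2)) (is_cvg_series_exp_coeff _)
    (norm_bessel_kernel_le a _ one_le1) k).
by apply/funext => q; rewrite bessel_termE /diagonal /bessel_kernel mulr1.
Qed.

Lemma lim_diagonal_bessel_kernel a g k :
  limn (series (diagonal (bessel_kernel a g) k)) = besselJ k a * g k.
Proof.
case: k => m /=.
  have -> : diagonal (bessel_kernel a g) m = g m *: bessel_term m a.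
    apply/funext => q; rewrite /diagonal /bessel_kernel !fctE bessel_termE.
    rewrite (_ : (q + m)%N%:Z - q%:Z = m%:Z); last by lia.
    by rewrite /GRing.scale /=; ring.
  rewrite lim_seriesZ; last exact: is_cvg_bessel_term.
  by rewrite [RHS]mulrC.
have -> : diagonal (bessel_kernel a g) (Negz m) =
    ((-1) ^+ m.+1 * g (Negz m)) *: bessel_term m.+1 a.
  apply/funext => q; rewrite /diagonal /bessel_kernel !fctE bessel_termE.
  rewrite (_ : q%:Z - (q + m.+1)%N%:Z = Negz m); last by rewrite NegzE; lia.
  by rewrite exprD /GRing.scale /=; ring.
rewrite lim_seriesZ; last exact: is_cvg_bessel_term.
by rewrite /= mulrAC.
Qed.

End BesselKernel.

Section JacobiAnger.
Context {R : realType}.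
Implicit Types (a theta b : R).

Lemma square_sum_bessel_kernel_sinE a theta b P :
  \sum_(0 <= p < P) \sum_(0 <= q < P)
    bessel_kernel a (fun k => sin (k%:~R * theta + b)) p q =
  pseries (egf_coeff (fun p => sin (p%:R * theta))) (a / 2) P *
    pseries (egf_coeff (fun q => cos (b - q%:R * theta))) (- (a / 2)) P +
  pseries (egf_coeff (fun p => cos (p%:R * theta))) (a / 2) P *
    pseries (egf_coeff (fun q => sin (b - q%:R * theta))) (- (a / 2)) P.
Proof.
rewrite /pseries /series /= !mulr_suml -big_split; apply: eq_bigr => p _ /=.
rewrite !mulr_sumr -big_split; apply: eq_bigr => q _ /=.
rewrite /egf_coeff /bessel_kernel /exp_coeff /= rmorphB /= (exprNn (a / 2)).
rewrite (_ : (p%:R - q%:R) * theta + b = p%:R * theta + (b - q%:R * theta)); last by ring.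
by rewrite (sinD (p%:R * theta)); ring.
Qed.

Lemma egf_trig_product a theta b :
  egf (fun p => sin (p%:R * theta)) (a / 2) *
    egf (fun q => cos (b - q%:R * theta)) (- (a / 2)) +
  egf (fun p => cos (p%:R * theta)) (a / 2) *
    egf (fun q => sin (b - q%:R * theta)) (- (a / 2)) =
  sin (a * sin theta + b).
Proof.
have cos_le1 p : `|cos (p%:R * theta)| <= 1 by apply: cos_max.
have sin_le1 p : `|sin (p%:R * theta)| <= 1 by apply: sin_max.
have -> : (fun q => cos (b - q%:R * theta)) =
    (fun q => cos b * cos (q%:R * theta) + sin b * sin (q%:R * theta)).
  by apply/funext => q; rewrite cosB.
have -> : (fun q => sin (b - q%:R * theta)) =
    (fun q => sin b * cos (q%:R * theta) + - cos b * sin (q%:R * theta)).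
  by apply/funext => q; rewrite sinB mulNr.
rewrite !(egf_lin cos_le1 sin_le1).
have [-> ->] := egf_cos_sin_mul theta (a / 2).
have [-> ->] := egf_cos_sin_mul theta (- (a / 2)).
rewrite !mulNr cosN sinN.
set u := a / 2 * sin theta.
have -> : a * sin theta + b = u + u + b by rewrite /u -mulrDl -splitr.
have expR_inv := expRxMexpNx_1 (a / 2 * cos theta).
set X := expR _ in expR_inv *; set X' := expR _ in expR_inv *.
rewrite sinD sinD cosD.
transitivity (X * X' * (sin u * (cos b * cos u - sin b * sin u) +
    cos u * (sin b * cos u + cos b * sin u))); first by ring.
by rewrite expR_inv mul1r; ring.
Qed.

Lemma jacobi_anger_sin a theta b :
  (fun N => centered_sum N (fun k => besselJ k a * sin (k%:~R * theta + b))) @ \oo -->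
  sin (a * sin theta + b).
Proof.
have sin_le1 (k : int) : `|sin (k%:~R * theta + b)| <= 1 by apply: sin_max.
set g := fun k : int => sin (k%:~R * theta + b).
have -> : (fun k => besselJ k a * g k) =
    (fun k => limn (series (diagonal (bessel_kernel a g) k))).
  by apply/funext => k; rewrite lim_diagonal_bessel_kernel.
apply: (cvg_centered_sum_diagonals (exp_coeff_ge0 (a / 2)) (is_cvg_series_exp_coeff _)
  (norm_bessel_kernel_le a _ sin_le1)).
under eq_fun do rewrite square_sum_bessel_kernel_sinE.
rewrite -egf_trig_product.
apply: cvgD; apply: cvgM.
- exact: (is_cvg_egf (fun p => sin_max _) _).
- exact: (is_cvg_egf (fun p => cos_max _) _).
- exact: (is_cvg_egf (fun p => cos_max _) _).
- exact: (is_cvg_egf (fun p => sin_max _) _).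
Qed.

Lemma centered_sum_norm_besselJ_le a N :
  centered_sum N (fun k => `|besselJ k a|) <= expR `|a| *+ 2.
Proof.
have one_le1 (k : int) : `|1 : R| <= 1 by rewrite normr1.
have -> : (fun k => `|besselJ k a|) =
    (fun k => `|limn (series (diagonal (bessel_kernel a (fun=> 1)) k))|).
  by apply/funext => k; rewrite lim_diagonal_bessel_kernel mulr1.
apply: le_trans (centered_sum_norm_lim_diagonal_le (exp_coeff_ge0 (a / 2))
  (is_cvg_series_exp_coeff _) (norm_bessel_kernel_le a _ one_le1) N) _.
by rewrite -expRD normf_div normr_nat -splitr.
Qed.

End JacobiAnger.

Section ComplexExponential.
Context {R : realType}.
Implicit Types (x y : R) (z w : R[i]) (u v : nat -> R[i]).
Local Notation Re := (@complex.Re R).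
Local Notation Im := (@complex.Im R).
Local Open Scope complex_scope.

Definition cis x : R[i] := Complex (cos x) (sin x).

Lemma ReM z w : Re (z * w) = Re z * Re w - Im z * Im w.
Proof. by case: z w => [a b] [c d]. Qed.

Lemma ImM z w : Im (z * w) = Re z * Im w + Im z * Re w.
Proof. by case: z w => [a b] [c d]. Qed.

Lemma cis0 : cis 0 = 1.
Proof. by rewrite /cis cos0 sin0. Qed.

Lemma cisD x y : cis (x + y) = cis x * cis y.
Proof. by apply/eqP; rewrite eq_complex /= cosD sinD [sin x * _ + _]addrC !eqxx. Qed.

Lemma cis_sum I (r : seq I) (F : I -> R) :
  cis (\sum_(i <- r) F i) = \prod_(i <- r) cis (F i).
Proof. exact: (big_morph _ cisD cis0). Qed.

Lemma Im_cis_mul x y b : Im (cis b * (x%:C * cis y)) = x * sin (y + b).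
Proof. by rewrite ImM /= sinD; ring. Qed.

Definition complex_cvg u z : Prop :=
  (fun N => Re (u N)) @ \oo --> Re z /\ (fun N => Im (u N)) @ \oo --> Im z.

Lemma complex_cvg_cst z : complex_cvg (fun=> z) z.
Proof. by split; apply: cvg_cst. Qed.

Lemma complex_cvgM {u v z w} : complex_cvg u z -> complex_cvg v w ->
  complex_cvg (fun N => u N * v N) (z * w).
Proof.
move=> [uRe uIm] [vRe vIm]; split.
  by under eq_fun do rewrite ReM; rewrite ReM; apply: cvgB; apply: cvgM.
by under eq_fun do rewrite ImM; rewrite ImM; apply: cvgD; apply: cvgM.
Qed.

Lemma complex_cvg_prod {I} (r : seq I) {u : I -> nat -> R[i]} {z : I -> R[i]} :
  (forall i, complex_cvg (u i) (z i)) ->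
  complex_cvg (fun N => \prod_(i <- r) u i N) (\prod_(i <- r) z i).
Proof.
move=> uz; elim: r => [|i r IH].
  by rewrite big_nil; under eq_fun do rewrite big_nil; apply: complex_cvg_cst.
by rewrite big_cons; under eq_fun do rewrite big_cons; apply: complex_cvgM.
Qed.

Definition jacobi_anger_sum a theta N : R[i] :=
  centered_sum N (fun k => (besselJ k a)%:C * cis (k%:~R * theta)).

Lemma jacobi_anger_cis a theta :
  complex_cvg (jacobi_anger_sum a theta) (cis (a * sin theta)).
Proof.
rewrite /jacobi_anger_sum; split.
- under eq_fun do rewrite (raddf_centered_sum Re).
  have -> : (fun k => Re ((besselJ k a)%:C * cis (k%:~R * theta))) =
      (fun k => besselJ k a * sin (k%:~R * theta + pi / 2)).
    by apply/funext => k; rewrite ReM /= sinDpihalf; ring.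
  by rewrite /= -sinDpihalf; apply: jacobi_anger_sin.
- under eq_fun do rewrite (raddf_centered_sum Im).
  have -> : (fun k => Im ((besselJ k a)%:C * cis (k%:~R * theta))) =
      (fun k => besselJ k a * sin (k%:~R * theta + 0)).
    by apply/funext => k; rewrite ImM /= addr0; ring.
  by rewrite /= -[a * sin theta]addr0; apply: jacobi_anger_sin.
Qed.

End ComplexExponential.

Theorem theorem1 (R : realType) (n : nat) (hn : (1 <= n)%N)
  (a w phi : 'I_n -> R) (b : R) :
  forall x : R,
    (exists M : R, forall N : nat,
        box_sum N (fun k => `|expansion_term a w phi b x k|) <= M) /\
    ((fun N : nat => box_sum N (expansion_term a w phi b x)) @ \oo
       --> sin_neuron a w phi b x).
Proof.
move=> x; pose theta i := w i * x + phi i; split.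
- exists (\prod_(i < n) (expR `|a i| *+ 2)) => N.
  apply: le_trans (_ : box_sum N (fun k => \prod_(i < n) `|besselJ (k i) (a i)|) <= _).
    apply: ler_sum => k _; rewrite normrM /alpha normr_prod ler_piMr ?sin_max //.
    exact: prodr_ge0.
  rewrite (box_sum_prod _ N (fun i k => `|besselJ k (a i)|)); apply: ler_prod => i _.
  by rewrite sumr_ge0 ?centered_sum_norm_besselJ_le.
- pose Z i := jacobi_anger_sum (a i) (theta i).
  have box_sumE N : box_sum N (expansion_term a w phi b x) =
      complex.Im (cis b * \prod_(i < n) Z i N).
    rewrite prod_centered_sum mulr_sumr raddf_sum; apply: eq_bigr => k _.
    by rewrite big_split /= -rmorph_prod -cis_sum Im_cis_mul.
  have := (complex_cvgM (complex_cvg_cst (cis b))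
    (complex_cvg_prod (index_enum 'I_n) (fun i => jacobi_anger_cis (a i) (theta i)))).2.
  rewrite -cis_sum -cisD /= /sin_neuron addrC.
  by under eq_fun do rewrite -box_sumE.
Qed.
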